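(* There exist a function $\gamma:[0,\infty)\to\mathbb{R}$ and $t_0>0$ such that (i) $\gamma(t)>0$ for $t\in[0,t_0)$ and $\gamma(t)=0$ for $t\in[t_0,\infty)$; (ii) $e^{-t}-w_-(e^{-t})-\int_0^tw_-(e^{-t+s})\gamma(s)\,ds=0$ for all $t\in[0,t_0]$; (iii) $e^{-t}-w_-(e^{-t})-\int_0^tw_-(e^{-t+s})\gamma(s)\,ds<0$ for all $t\in(t_0,\infty)$.
   Context: $w_-:[0,1]\to[0,1]$ is strictly increasing, thrice differentiable, with $w_-(0)=0$, $w_-(1)=1$, $w_-'(0)>1$, $w_-'(1)>1$ and $w_-'''(p)>0$ for all $p$. *)

From Stdlib Require Import Reals.
From Coquelicot Require Import Coquelicot.
Open Scope R_scope.

(* Standing assumptions on the probability weighting function w_- :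
   strictly increasing self-map of [0,1], thrice differentiable on [0,1],
   w(0)=0, w(1)=1, w'(0)>1, w'(1)>1, w'''(p)>0 for all p in [0,1].
   w is given as a function R -> R; only its values on [0,1] (and the
   germs at the endpoints needed for the derivatives) matter. *)
Definition wminus_hyp (w : R -> R) : Prop :=
  (forall x y, 0 <= x -> x < y -> y <= 1 -> w x < w y) /\
  (forall x, 0 <= x <= 1 -> 0 <= w x <= 1) /\
  (forall x, 0 <= x <= 1 ->
     ex_derive w x /\ ex_derive (Derive w) x /\
     ex_derive (Derive (Derive w)) x) /\
  w 0 = 0 /\ w 1 = 1 /\
  Derive w 0 > 1 /\ Derive w 1 > 1 /\
  (forall p, 0 <= p <= 1 -> Derive (Derive (Derive w)) p > 0).

Definition Phi (w gamma : R -> R) (t : R) : R :=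
  exp (- t) - w (exp (- t)) - RInt (fun s => w (exp (- t + s)) * gamma s) 0 t.

From Stdlib Require Import Reals Lra Lia.
From Coquelicot Require Import Coquelicot.
Open Scope R_scope.

(* Differentiating (ii) turns it into the Volterra equation of the second kind
     Γ(t) = g(t) + ∫_0^t k(t - s) Γ(s) ds,  k(u) = w'(e^-u) e^-u,  g(t) = d/dt (e^-t - w(e^-t)),
   whose continuous solution Γ, obtained by Picard iteration, satisfies (ii) on [0, T].
   Γ(0) = w'(1) - 1 > 0.  Since w'(0) > 1, e^-T - w(e^-T) < 0 for some T, and as w >= 0 this
   forces Γ to vanish in [0, T]; γ is Γ stopped at its first zero t0.
   For t > t0 the quantity in (iii) is H(e^-t), where H(z) = z - w(z) - ∫_0^t0 w(z e^s) Γ(s) ds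
   satisfies H(0) = H(X) = 0 and, by the Volterra equation at t0, H'(X) = 0, with X = e^-t0.
   Since w''' > 0, the divided difference H[0, x, X, X] is negative for 0 < x < X, and with
   these three vanishing values it is a positive multiple of H(x). *)

(* Coquelicot states these over abstract normed modules; in that form they do not unify with
   Rplus, Rmult, ... under apply or rewrite. *)
Lemma continuous_Rplus (f g : R -> R) x :
  continuous f x -> continuous g x -> continuous (fun y => f y + g y) x.
Proof. apply (continuous_plus f g). Qed.

Lemma continuous_Rminus (f g : R -> R) x :
  continuous f x -> continuous g x -> continuous (fun y => f y - g y) x.
Proof. apply (continuous_minus f g). Qed.

Lemma continuous_Rmult (f g : R -> R) x :
  continuous f x -> continuous g x -> continuous (fun y => f y * g y) x.
Proof. apply (continuous_mult f g). Qed.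

Lemma continuous_Ropp (f : R -> R) x : continuous f x -> continuous (fun y => - f y) x.
Proof. apply (continuous_opp f). Qed.

Lemma continuous_Rcomp (f g : R -> R) x :
  continuous f x -> continuous g (f x) -> continuous (fun y => g (f y)) x.
Proof. apply (continuous_comp f g). Qed.

Lemma continuous_of_ex_derive (f : R -> R) x : ex_derive f x -> continuous f x.
Proof. apply (ex_derive_continuous (V := R_NormedModule) f). Qed.

Lemma continuous_of_is_derive (f : R -> R) x l : is_derive f x l -> continuous f x.
Proof. intros H. apply continuous_of_ex_derive. now exists l. Qed.

Lemma is_derive_Rminus (f g : R -> R) x a b :
  is_derive f x a -> is_derive g x b -> is_derive (fun y => f y - g y) x (a - b).
Proof. apply (is_derive_minus f g). Qed.

Lemma ex_RInt_continuous_R (f : R -> R) a b :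
  (forall x, Rmin a b <= x <= Rmax a b -> continuous f x) -> ex_RInt f a b.
Proof. apply (ex_RInt_continuous (V := R_CompleteNormedModule)). Qed.

Lemma RInt_point_R (f : R -> R) a : RInt f a a = 0.
Proof. apply (RInt_point (V := R_CompleteNormedModule)). Qed.

Lemma RInt_Ropp (f : R -> R) a b : ex_RInt f a b -> RInt (fun x => - f x) a b = - RInt f a b.
Proof. apply (RInt_opp f). Qed.

Lemma RInt_Rmult_l (f : R -> R) a b c : ex_RInt f a b -> RInt (fun x => c * f x) a b = c * RInt f a b.
Proof. apply (RInt_scal f). Qed.

Lemma RInt_0_R a b : RInt (fun _ => 0) a b = 0.
Proof. rewrite RInt_const. apply Rmult_0_r. Qed.

Lemma RInt_Chasles_R (f : R -> R) a b c :
  ex_RInt f a b -> ex_RInt f b c -> RInt f a b + RInt f b c = RInt f a c.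
Proof. apply (RInt_Chasles f). Qed.

Lemma RInt_ext_R (f g : R -> R) a b :
  (forall x, Rmin a b < x < Rmax a b -> f x = g x) -> RInt f a b = RInt g a b.
Proof. apply RInt_ext. Qed.

Lemma exp_le_compat x y : x <= y -> exp x <= exp y.
Proof. intros [H|H]; [left; now apply exp_increasing | right; now subst]. Qed.

Lemma exp_neg_range u : 0 <= u -> 0 <= exp (- u) <= 1.
Proof.
  intros Hu. split; [left; apply exp_pos|]. rewrite <- exp_0. apply exp_le_compat. lra.
Qed.

Lemma continuous_pos_near (f : R -> R) x :
  continuous f x -> 0 < f x -> exists d, 0 < d /\ forall y, Rabs (y - x) < d -> 0 < f y.
Proof.
  intros Hc Hfx.
  destruct (proj1 (continuity_pt_locally f x) (proj2 (continuity_pt_filterlim f x) Hc)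
              (mkposreal _ Hfx)) as [d Hd].
  exists d. split; [apply cond_pos|]. intros y Hy.
  generalize (Hd y Hy). simpl. intros H. apply Rabs_def2 in H. lra.
Qed.

Lemma continuous_of_lipschitz_at (f : R -> R) x K :
  (forall y, Rabs (y - x) < 1 -> Rabs (f y - f x) <= K * Rabs (y - x)) -> continuous f x.
Proof.
  intros Hf. apply continuity_pt_filterlim, continuity_pt_locally. intros eps.
  assert (HK : 0 < Rabs K + 1) by (generalize (Rabs_pos K); lra).
  assert (Hd : 0 < Rmin 1 (eps / (Rabs K + 1))).
  { apply Rmin_glb_lt; [lra | apply Rdiv_lt_0_compat; [apply cond_pos | lra]]. }
  exists (mkposreal _ Hd). intros y Hy; simpl in Hy.
  assert (Hy1 := Rlt_le_trans _ _ _ Hy (Rmin_l _ _)).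
  assert (Hy2 := Rlt_le_trans _ _ _ Hy (Rmin_r _ _)).
  apply Rle_lt_trans with ((Rabs K + 1) * Rabs (y - x)).
  - eapply Rle_trans; [apply Hf, Hy1 |].
    apply Rmult_le_compat_r; [apply Rabs_pos | generalize (RRle_abs K); lra].
  - apply Rmult_lt_compat_l with (r := Rabs K + 1) in Hy2; [|exact HK].
    now replace ((Rabs K + 1) * (eps / (Rabs K + 1))) with (pos eps) in Hy2 by (field; lra).
Qed.

Lemma continuous_bounded_on (h : R -> R) a b : a <= b ->
  (forall x, a <= x <= b -> continuous h x) ->
  exists B, 0 <= B /\ forall x, a <= x <= b -> Rabs (h x) <= B.
Proof.
  intros Hab Hh.
  destruct (continuity_ab_maj (fun x => Rabs (h x)) a b Hab) as [m [Hm _]].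
  - intros c Hc. apply continuity_pt_filterlim, continuous_Rabs_comp, Hh, Hc.
  - exists (Rabs (h m)). split; [apply Rabs_pos | exact Hm].
Qed.

Lemma uniform_limit_continuous (F : nat -> R -> R) (G : R -> R) :
  (forall n x, continuous (F n) x) ->
  (forall eps, 0 < eps -> exists n, forall y, Rabs (F n y - G y) < eps) ->
  forall x, continuous G x.
Proof.
  intros HF Hu x. apply continuity_pt_filterlim, continuity_pt_locally. intros eps.
  assert (He : 0 < eps / 3) by (generalize (cond_pos eps); lra).
  destruct (Hu _ He) as [n Hn].
  destruct (proj1 (continuity_pt_locally (F n) x) (proj2 (continuity_pt_filterlim _ _) (HF n x))
              (mkposreal _ He)) as [d Hd].
  exists d. intros y Hy. specialize (Hd y Hy). simpl in Hd.
  generalize (Hn y) (Hn x). intros Hy' Hx'.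
  replace (G y - G x) with ((F n y - F n x) - (F n y - G y) + (F n x - G x)) by ring.
  eapply Rle_lt_trans; [apply Rabs_triang|].
  eapply Rle_lt_trans; [apply Rplus_le_compat_r, Rabs_triang|]. rewrite Rabs_Ropp. lra.
Qed.

Lemma first_root (f : R -> R) a b : a <= b ->
  (forall x, a <= x <= b -> continuous f x) -> 0 < f a ->
  ~ (forall x, a <= x <= b -> 0 < f x) ->
  exists c, a < c <= b /\ f c = 0 /\ forall x, a <= x < c -> 0 < f x.
Proof.
  intros Hab Hc Ha Hnot.
  set (S := fun t => a <= t <= b /\ forall s, a <= s <= t -> 0 < f s).
  assert (Sa : S a) by (split; [lra | intros s Hs; now replace s with a by lra]).
  destruct (completeness S) as [c [Hub Hlub]]; [exists b; intros t [Ht _]; lra | now exists a |].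
  assert (Hac : a <= c <= b) by (split; [now apply Hub | apply Hlub; intros t [Ht _]; lra]).
  assert (Hpos : forall x, a <= x < c -> 0 < f x).
  { intros x Hx. destruct (Rle_lt_dec (f x) 0) as [Hfx|Hfx]; [exfalso|exact Hfx].
    assert (c <= x); [|lra]. apply Hlub. intros t [_ Ht].
    destruct (Rle_lt_dec t x) as [|Hxt]; [assumption|].
    generalize (Ht x ltac:(lra)). lra. }
  assert (Hfc_le : f c <= 0).
  { destruct (Rle_lt_dec (f c) 0) as [|Hfc]; [assumption | exfalso].
    destruct (continuous_pos_near f c (Hc c Hac) Hfc) as [d [Hd Hnear]].
    assert (Hc' : forall x, a <= x <= Rmin b (c + d / 2) -> 0 < f x).
    { intros x Hx. destruct (Rlt_le_dec x c) as [Hxc|Hxc]; [apply Hpos; lra|].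
      apply Hnear. generalize (Rmin_r b (c + d / 2)). rewrite Rabs_right; lra. }
    destruct (Rlt_le_dec c b) as [Hcb|Hcb].
    - assert (Rmin b (c + d / 2) <= c); [|generalize (Rmin_glb_lt b (c + d / 2) c Hcb); lra].
      apply Hub. split; [generalize (Rmin_l b (c + d / 2)) (Rmin_glb b (c + d / 2) a); lra|].
      exact Hc'.
    - apply Hnot. intros x Hx. apply Hc'. rewrite Rmin_left; lra. }
  assert (Hfc_ge : 0 <= f c).
  { destruct (Rle_lt_dec 0 (f c)) as [|Hfc]; [assumption | exfalso].
    destruct (continuous_pos_near (fun y => - f y) c) as [d [Hd Hnear]];
      [now apply continuous_Ropp, Hc | lra |].
    set (s := Rmax a (c - d / 2)).
    assert (Hs : (s < c \/ s = a) /\ Rabs (s - c) < d).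
    { unfold s, Rmax. destruct (Rle_dec a (c - d / 2)) as [H|H]; [|apply Rnot_le_lt in H];
        (split; [|rewrite Rabs_left1; lra]); [left | right]; lra. }
    assert (0 < - f s) by (apply Hnear, Hs).
    assert (0 < f s); [|lra].
    destruct Hs as [[Hsc| ->] _]; [apply Hpos; split; [apply Rmax_l | exact Hsc] | exact Ha]. }
  exists c. split; [|split; [lra | exact Hpos]].
  destruct (Req_dec c a) as [->|]; lra.
Qed.

Lemma Rolle_is_derive (f df : R -> R) a b : a < b ->
  (forall z, a <= z <= b -> is_derive f z (df z)) -> f a = f b ->
  exists c, a < c < b /\ df c = 0.
Proof.
  intros Hab Hd Hfab.
  set (pr := fun z (Hz : a < z < b) =>
    exist (fun l => derivable_pt_abs f z l) (df z)
      (proj1 (is_derive_Reals f z (df z)) (Hd z (conj (Rlt_le _ _ (proj1 Hz)) (Rlt_le _ _ (proj2 Hz)))))).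
  destruct (Rolle f a b pr) as [c [P Hc]]; auto.
  - intros x Hx. apply continuity_pt_filterlim, (continuous_of_is_derive _ _ _ (Hd x Hx)).
  - now exists c.
Qed.

Lemma is_derive_0_const (f : R -> R) a b : a <= b ->
  (forall x, a <= x <= b -> is_derive f x 0) -> f b = f a.
Proof.
  intros Hab Hd.
  destruct (MVT_gen f a b (fun _ => 0)) as [c [_ Hc]]; rewrite ?Rmin_left, ?Rmax_right by lra.
  - intros x Hx. apply Hd; lra.
  - intros x Hx. apply continuity_pt_filterlim. eapply continuous_of_is_derive, Hd, Hx.
  - lra.
Qed.

Lemma is_derive_convolution (K k h : R -> R) t :
  (forall u, is_derive K u (k u)) -> (forall u, continuous k u) -> (forall u, continuous h u) ->
  is_derive (fun t => RInt (fun s => K (t - s) * h s) 0 t) t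
            (K 0 * h t + RInt (fun s => k (t - s) * h s) 0 t).
Proof.
  intros HK Hk Hh.
  set (f := fun t s => K (t - s) * h s).
  assert (Hf : forall t s, continuous (fun s => f t s) s).
  { intros t' s. apply continuous_Rmult; [|apply Hh].
    apply (continuous_Rcomp (fun s => t' - s)); [|eapply continuous_of_is_derive, HK].
    apply continuous_Rminus; [apply continuous_const | apply continuous_id]. }
  assert (Hft : forall t s, is_derive (fun u => f u s) t (k (t - s) * h s)).
  { intros t' s. unfold f. rewrite <- (is_derive_unique K (t' - s) (k (t' - s)) (HK _)).
    auto_derive; [now exists (k (t' - s)) | now rewrite Rmult_1_l]. }
  assert (HDft : forall t s, Derive (fun u => f u s) t = k (t - s) * h s)
    by (intros; now apply is_derive_unique).
  assert (Hft2 : forall u v, continuity_2d_pt (fun u v => Derive (fun z => f z v) u) u v).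
  { intros u v. apply (continuity_2d_pt_ext (fun u v => k (u - v) * h v)); [intros; now rewrite HDft|].
    apply continuity_2d_pt_mult; apply continuity_1d_2d_pt_comp.
    - apply continuity_pt_filterlim, Hk.
    - apply continuity_2d_pt_minus; [apply continuity_2d_pt_id1 | apply continuity_2d_pt_id2].
    - apply continuity_pt_filterlim, Hh.
    - apply continuity_2d_pt_id2. }
  assert (Hex : forall a b, locally t (fun y => ex_RInt (fun s => f y s) a b))
    by (intros; apply filter_forall; intros; apply ex_RInt_continuous_R; intros; apply Hf).
  replace (K 0 * h t + RInt (fun s => k (t - s) * h s) 0 t)
    with (RInt (fun s => Derive (fun u => f u s) t) 0 t + - f t 0 * 0 + f t t * 1)
    by (rewrite (RInt_ext _ (fun s => k (t - s) * h s)) by (intros; apply HDft);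
        unfold f; rewrite Rminus_diag; ring).
  apply (is_derive_RInt_param_bound_comp f (fun _ => 0) (fun t => t)).
  - apply Hex.
  - exists (mkposreal 1 Rlt_0_1). apply Hex.
  - exists (mkposreal 1 Rlt_0_1). apply Hex.
  - auto_derive; trivial.
  - auto_derive; trivial.
  - exists (mkposreal 1 Rlt_0_1). apply filter_forall. intros y s _.
    eexists; apply Hft.
  - intros; apply Hft2.
  - exists (mkposreal 1 Rlt_0_1). intros; apply Hft2.
  - exists (mkposreal 1 Rlt_0_1). intros; apply Hft2.
  - apply continuity_pt_filterlim, Hf.
  - apply continuity_pt_filterlim, Hf.
Qed.

Lemma Rabs_RInt_le_const (f : R -> R) a b M : ex_RInt f a b ->
  (forall t, Rmin a b <= t <= Rmax a b -> Rabs (f t) <= M) ->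
  Rabs (RInt f a b) <= Rabs (b - a) * M.
Proof.
  intros Hi Hb. destruct (Rle_dec a b) as [Hab|Hab].
  - rewrite (Rabs_right (b - a)) by lra. apply abs_RInt_le_const; auto.
    intros t Ht; apply Hb; rewrite Rmin_left, Rmax_right; lra.
  - rewrite <- (opp_RInt_swap f b a) by now apply ex_RInt_swap.
    change (Rabs (- RInt f b a) <= Rabs (b - a) * M).
    rewrite Rabs_Ropp, (Rabs_minus_sym b a), (Rabs_right (a - b)) by lra.
    apply abs_RInt_le_const; [lra | now apply ex_RInt_swap |].
    intros t Ht; apply Hb; rewrite Rmin_right, Rmax_left; lra.
Qed.

Lemma Rabs_RInt_le_RInt (f g : R -> R) a b : a <= b -> ex_RInt f a b -> ex_RInt g a b ->
  (forall x, a <= x <= b -> Rabs (f x) <= g x) -> Rabs (RInt f a b) <= RInt g a b.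
Proof.
  intros Hab Hf Hg Hfg. eapply Rle_trans; [now apply abs_RInt_le|].
  apply RInt_le; [exact Hab | now apply ex_RInt_norm | exact Hg |].
  intros x Hx. apply Hfg. lra.
Qed.

Lemma is_lim_seq_geom_half (C : R) : is_lim_seq (fun n => C * (/2)^n) 0.
Proof.
  rewrite <- (Rmult_0_r C).
  apply (is_lim_seq_scal_l _ C 0), is_lim_seq_geom. rewrite Rabs_right; lra.
Qed.

Lemma eq_0_of_geometric_bound (x C : R) : (forall n, Rabs x <= C * (/2)^n) -> x = 0.
Proof.
  intros H.
  assert (Hle := is_lim_seq_le _ _ _ _ H (is_lim_seq_const (Rabs x)) (is_lim_seq_geom_half C)).
  simpl in Hle. destruct (Req_dec x 0) as [|Hx]; [assumption|].
  generalize (Rabs_pos_lt x Hx). lra.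
Qed.

Lemma geometric_half_small (C eps : R) : 0 < eps -> exists N, C * (/2)^N < eps.
Proof.
  intros Heps.
  destruct (proj1 (filterlim_locally _ _) (is_lim_seq_geom_half C) (mkposreal _ Heps)) as [N HN].
  exists N. assert (HN' := HN N (le_n N)).
  change (Rabs (C * (/2)^N - 0) < eps) in HN'. rewrite Rminus_0_r in HN'.
  eapply Rle_lt_trans; [apply RRle_abs | exact HN'].
Qed.

Lemma geometric_tail_bound (u : nat -> R) C :
  (forall n, Rabs (u (S n) - u n) <= C * (/2)^n) ->
  forall n m, (n <= m)%nat -> Rabs (u m - u n) <= 2 * C * (/2)^n.
Proof.
  intros Hu.
  assert (Htele : forall n m, Rabs (u (n + m)%nat - u n) <= 2 * C * ((/2)^n - (/2)^(n + m))).
  { intros n m. induction m as [|m IH].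
    - rewrite Nat.add_0_r, Rminus_diag, Rabs_R0. right; ring.
    - rewrite Nat.add_succ_r.
      replace (u (S (n + m)) - u n)
        with ((u (S (n + m)) - u (n + m)%nat) + (u (n + m)%nat - u n)) by ring.
      eapply Rle_trans; [apply Rabs_triang|].
      eapply Rle_trans; [apply Rplus_le_compat; [apply Hu | apply IH]|].
      simpl. right; field. }
  intros n m Hnm. replace m with (n + (m - n))%nat by lia.
  eapply Rle_trans; [apply Htele|].
  assert (0 <= C) by (generalize (Hu O) (Rabs_pos (u 1%nat - u O)); simpl; lra).
  assert (0 <= (/2)^(n + (m - n))) by (apply pow_le; lra).
  nra.
Qed.

Lemma geometric_cauchy_bound (u : nat -> R) C :
  (forall n, Rabs (u (S n) - u n) <= C * (/2)^n) ->
  forall n, Rabs (u n - real (Lim_seq u)) <= 2 * C * (/2)^n.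
Proof.
  intros Hu. assert (Hbound := geometric_tail_bound u C Hu).
  assert (Hlim : ex_finite_lim_seq u).
  { apply ex_lim_seq_cauchy_corr. intros eps.
    destruct (geometric_half_small (4 * C) eps (cond_pos eps)) as [N HN].
    exists N. intros n m Hn Hm.
    replace (u n - u m) with ((u n - u N) - (u m - u N)) by ring.
    eapply Rle_lt_trans; [apply Rabs_triang|]. rewrite Rabs_Ropp.
    generalize (Hbound N n Hn) (Hbound N m Hm). lra. }
  intros n. destruct Hlim as [l Hl]. rewrite (is_lim_seq_unique _ _ Hl). simpl.
  rewrite Rabs_minus_sym.
  apply (is_lim_seq_le_loc (fun m => Rabs (u m - u n)) (fun _ => 2 * C * (/2)^n)
                           (Rabs (l - u n)) (2 * C * (/2)^n)).
  - exists n. apply Hbound.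
  - apply (is_lim_seq_abs _ (l - u n)), (is_lim_seq_minus' _ _ l (u n));
      [exact Hl | apply is_lim_seq_const].
  - apply is_lim_seq_const.
Qed.

Definition clamp (T u : R) : R := Rmax 0 (Rmin u T).

Lemma clamp_range T u : 0 <= T -> 0 <= clamp T u <= T.
Proof. intros; unfold clamp, Rmax, Rmin; repeat destruct Rle_dec; lra. Qed.

Lemma clamp_id T u : 0 <= u <= T -> clamp T u = u.
Proof. intros; unfold clamp, Rmax, Rmin; repeat destruct Rle_dec; lra. Qed.

Lemma clamp_of_ge T u : 0 <= T -> T <= u -> clamp T u = T.
Proof. intros; unfold clamp, Rmax, Rmin; repeat destruct Rle_dec; lra. Qed.

Lemma clamp_lipschitz T u v : Rabs (clamp T u - clamp T v) <= Rabs (u - v).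
Proof.
  unfold clamp, Rmax, Rmin; repeat destruct Rle_dec; unfold Rabs; repeat destruct Rcase_abs; lra.
Qed.

Lemma clamp_continuous T x : continuous (clamp T) x.
Proof.
  apply (continuous_of_lipschitz_at _ _ 1). intros y _. rewrite Rmult_1_l. apply clamp_lipschitz.
Qed.

Lemma bounded_clamp_comp (f : R -> R) T : 0 <= T ->
  (forall u, 0 <= u <= T -> continuous f u) ->
  exists B, 0 <= B /\ forall u, Rabs (f (clamp T u)) <= B.
Proof.
  intros HT Hf. destruct (continuous_bounded_on f 0 T HT Hf) as [B [HB HBf]].
  exists B. split; [exact HB|]. intros u. apply HBf, clamp_range, HT.
Qed.

Lemma lipschitz_clamp_comp (f df : R -> R) T : 0 <= T ->
  (forall u, 0 <= u <= T -> is_derive f u (df u)) ->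
  (forall u, 0 <= u <= T -> continuous df u) ->
  exists L, forall u v, Rabs (f (clamp T u) - f (clamp T v)) <= L * Rabs (u - v).
Proof.
  intros HT Hf Hdf. destruct (continuous_bounded_on df 0 T HT Hdf) as [L [HL HLdf]].
  exists L. intros u v.
  assert (Hu := clamp_range T u HT). assert (Hv := clamp_range T v HT).
  destruct (MVT_gen f (clamp T v) (clamp T u) df) as [c [Hc Hmvt]].
  - intros x Hx. apply Hf. unfold Rmin, Rmax in Hx; destruct Rle_dec in Hx; lra.
  - intros x Hx. apply continuity_pt_filterlim. eapply continuous_of_is_derive, Hf.
    unfold Rmin, Rmax in Hx; destruct Rle_dec in Hx; lra.
  - rewrite Hmvt, Rabs_mult.
    apply Rmult_le_compat; [apply Rabs_pos | apply Rabs_pos | | apply clamp_lipschitz].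
    apply HLdf. unfold Rmin, Rmax in Hc; destruct Rle_dec in Hc; lra.
Qed.

(** * Divided differences *)

(* The divided difference φ[0, x, X, X] of a function φ with φ(0) = p0, φ(x) = px, φ(X) = pX
   and φ'(X) = dX. *)
Definition hermite_dd (x X p0 px pX dX : R) : R :=
  ((dX - (pX - px) / (X - x)) / (X - x) - ((pX - px) / (X - x) - (px - p0) / x) / X) / X.

Lemma hermite_dd_linear x X p0 px pX dX :
  hermite_dd x X p0 px pX dX =
  hermite_dd x X 1 0 0 0 * p0 + hermite_dd x X 0 1 0 0 * px
  + hermite_dd x X 0 0 1 0 * pX + hermite_dd x X 0 0 0 1 * dX.
Proof. unfold hermite_dd, Rdiv. ring. Qed.

Lemma hermite_dd_scale x X c p0 px pX dX :
  hermite_dd x X (p0 * c) (px * c) (pX * c) (dX * c) = hermite_dd x X p0 px pX dX * c.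
Proof. unfold hermite_dd, Rdiv. ring. Qed.

Lemma hermite_dd_sub x X p0 px pX dX q0 qx qX eX :
  hermite_dd x X (p0 - q0) (px - qx) (pX - qX) (dX - eX) =
  hermite_dd x X p0 px pX dX - hermite_dd x X q0 qx qX eX.
Proof. unfold hermite_dd, Rdiv. ring. Qed.

Lemma hermite_dd_id x X : 0 < x < X -> hermite_dd x X 0 x X 1 = 0.
Proof. intros. unfold hermite_dd. field. lra. Qed.

Lemma hermite_dd_neg x X h : 0 < x < X -> hermite_dd x X 0 h 0 0 < 0 -> h < 0.
Proof.
  intros Hx Hneg.
  set (c := ((/ (X - x) + / x) / X + / (X - x) / (X - x)) / X).
  assert (Hc : 0 < c).
  { assert (0 < / (X - x)) by (apply Rinv_0_lt_compat; lra).
    assert (0 < / x) by (apply Rinv_0_lt_compat; lra).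
    assert (0 < / X) by (apply Rinv_0_lt_compat; lra).
    unfold c, Rdiv. apply Rmult_lt_0_compat; [|assumption].
    apply Rplus_lt_0_compat; apply Rmult_lt_0_compat; lra. }
  replace (hermite_dd x X 0 h 0 0) with (h * c) in Hneg by (unfold hermite_dd, c; field; lra).
  nra.
Qed.

Lemma is_RInt_hermite_dd (f0 fx fX g : R -> R) a b x X I0 Ix IX J :
  is_RInt f0 a b I0 -> is_RInt fx a b Ix -> is_RInt fX a b IX -> is_RInt g a b J ->
  is_RInt (fun s => hermite_dd x X (f0 s) (fx s) (fX s) (g s)) a b (hermite_dd x X I0 Ix IX J).
Proof.
  intros H0 Hx HX Hg.
  set (c0 := hermite_dd x X 1 0 0 0). set (c1 := hermite_dd x X 0 1 0 0).
  set (c2 := hermite_dd x X 0 0 1 0). set (c3 := hermite_dd x X 0 0 0 1).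
  assert (Hlin : forall p0 px pX dX : R, hermite_dd x X p0 px pX dX =
    plus (plus (plus (scal c0 p0) (scal c1 px)) (scal c2 pX)) (scal c3 dX)).
  { intros. apply hermite_dd_linear. }
  rewrite Hlin. apply (is_RInt_ext _ _ _ _ _ (fun s _ => eq_sym (Hlin _ _ _ _))).
  apply (is_RInt_plus (V := R_NormedModule)
           (fun s => plus (plus (scal c0 (f0 s)) (scal c1 (fx s))) (scal c2 (fX s))));
    [|now apply (is_RInt_scal (V := R_NormedModule))].
  apply (is_RInt_plus (V := R_NormedModule) (fun s => plus (scal c0 (f0 s)) (scal c1 (fx s))));
    [|now apply (is_RInt_scal (V := R_NormedModule))].
  apply (is_RInt_plus (V := R_NormedModule)); now apply (is_RInt_scal (V := R_NormedModule)).
Qed.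

Lemma second_derivative_two_roots (r r1 r2 : R -> R) x X : 0 < x < X ->
  (forall z, 0 <= z <= X -> is_derive r z (r1 z)) ->
  (forall z, 0 <= z <= X -> is_derive r1 z (r2 z)) ->
  r 0 = 0 -> r x = 0 -> r X = 0 -> r1 X = 0 ->
  exists u v, 0 < u < v /\ v < X /\ r2 u = 0 /\ r2 v = 0.
Proof.
  intros Hx Hr Hr1 H0 Hx0 HX HX1.
  destruct (Rolle_is_derive r r1 0 x) as [a [Ha Ha0]]; [lra | intros; apply Hr; lra | congruence |].
  destruct (Rolle_is_derive r r1 x X) as [b [Hb Hb0]]; [lra | intros; apply Hr; lra | congruence |].
  destruct (Rolle_is_derive r1 r2 a b) as [u [Hu Hu0]]; [lra | intros; apply Hr1; lra | congruence |].
  destruct (Rolle_is_derive r1 r2 b X) as [v [Hv Hv0]]; [lra | intros; apply Hr1; lra | congruence |].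
  exists u, v. repeat split; lra.
Qed.

Lemma hermite_dd_pos (phi phi1 phi2 : R -> R) x X : 0 < x < X ->
  (forall z, 0 <= z <= X -> is_derive phi z (phi1 z)) ->
  (forall z, 0 <= z <= X -> is_derive phi1 z (phi2 z)) ->
  (forall u v, 0 <= u -> u < v -> v <= X -> phi2 u < phi2 v) ->
  0 < hermite_dd x X (phi 0) (phi x) (phi X) (phi1 X).
Proof.
  intros Hx Hphi Hphi1 Hincr.
  set (c := hermite_dd x X (phi 0) (phi x) (phi X) (phi1 X)).
  set (b := (phi1 X * X - 2 * c * X ^ 3 - phi X + phi 0) / X ^ 2).
  set (a := phi1 X - 3 * c * X ^ 2 - 2 * b * X).
  (* r is phi minus its cubic Hermite interpolant at 0, x, X, X, whose leading coefficient is c. *)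
  set (r := fun z => phi z - (phi 0 + a * z + b * z ^ 2 + c * z ^ 3)).
  set (r1 := fun z => phi1 z - (a + 2 * b * z + 3 * c * z ^ 2)).
  set (r2 := fun z => phi2 z - (2 * b + 6 * c * z)).
  destruct (second_derivative_two_roots r r1 r2 x X) as [u [v [Huv [HvX [Hu Hv]]]]].
  - exact Hx.
  - intros z Hz. apply is_derive_Rminus; [now apply Hphi | auto_derive; [trivial | ring]].
  - intros z Hz. apply is_derive_Rminus; [now apply Hphi1 | auto_derive; [trivial | ring]].
  - unfold r. ring.
  - unfold r, a, b, c, hermite_dd. field. lra.
  - unfold r, a, b. field. lra.
  - unfold r1, a, b. ring.
  - assert (phi2 u < phi2 v) by (apply Hincr; lra).
    unfold r2 in Hu, Hv. nra.
Qed.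

(** * Volterra equations of the second kind *)

Section Volterra.

Variables (k g : R -> R) (T M L G : R).
Hypothesis T_nonneg : 0 <= T.
Hypothesis k_bound : forall u, Rabs (k u) <= M.
Hypothesis k_lipschitz : forall u v, Rabs (k u - k v) <= L * Rabs (u - v).
Hypothesis g_continuous : forall x, continuous g x.
Hypothesis g_bound : forall t, 0 <= t <= T -> Rabs (g t) <= G.

Definition conv (h : R -> R) (t : R) : R := RInt (fun s => k (t - s) * h s) 0 t.

Lemma M_nonneg : 0 <= M.
Proof. generalize (k_bound 0) (Rabs_pos (k 0)). lra. Qed.

Lemma G_nonneg : 0 <= G.
Proof. generalize (g_bound 0 (conj (Rle_refl 0) T_nonneg)) (Rabs_pos (g 0)). lra. Qed.

Lemma conv_integrand_continuous (h : R -> R) t :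
  (forall x, continuous h x) -> forall s, continuous (fun s => k (t - s) * h s) s.
Proof.
  intros Hh s. apply continuous_Rmult; [|apply Hh].
  apply (continuous_Rcomp (fun s => t - s)).
  - apply continuous_Rminus; [apply continuous_const | apply continuous_id].
  - apply (continuous_of_lipschitz_at _ _ L). intros; apply k_lipschitz.
Qed.

Lemma conv_continuous (h : R -> R) : (forall x, continuous h x) -> forall t, continuous (conv h) t.
Proof.
  intros Hh t.
  destruct (continuous_bounded_on h (- Rabs t - 1) (Rabs t + 1)) as [B [HB HhB]];
    [generalize (Rabs_pos t); lra | intros; apply Hh |].
  apply (continuous_of_lipschitz_at _ _ ((Rabs t * L + M) * B)). intros t' Ht'.
  assert (Hin : forall s, Rmin 0 t <= s <= Rmax 0 t \/ Rmin t t' <= s <= Rmax t t' ->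
                          - Rabs t - 1 <= s <= Rabs t + 1).
  { intros s Hs. revert Ht'. unfold Rmin, Rmax in Hs.
    destruct Rle_dec, Rle_dec in Hs; unfold Rabs; repeat destruct Rcase_abs; lra. }
  set (F' := fun s => k (t' - s) * h s). set (F := fun s => k (t - s) * h s).
  assert (IF' : forall a b, ex_RInt F' a b) by (intros; apply ex_RInt_continuous_R; intros; now apply conv_integrand_continuous).
  assert (IF : forall a b, ex_RInt F a b) by (intros; apply ex_RInt_continuous_R; intros; now apply conv_integrand_continuous).
  assert (Hsplit : conv h t' - conv h t = RInt (fun s => F' s - F s) 0 t + RInt F' t t').
  { assert (Hch := RInt_Chasles_R F' 0 t t' (IF' _ _) (IF' _ _)).
    assert (Hmin : RInt (fun s => F' s - F s) 0 t = RInt F' 0 t - RInt F 0 t)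
      by now apply (RInt_minus F' F).
    unfold conv. fold F F'. lra. }
  rewrite Hsplit.
  assert (E1 : Rabs (RInt (fun s => F' s - F s) 0 t) <= Rabs (t - 0) * (L * Rabs (t' - t) * B)).
  { apply Rabs_RInt_le_const.
    - apply (ex_RInt_minus (V := R_NormedModule)); auto.
    - intros s Hs. unfold F', F. rewrite <- Rmult_minus_distr_r, Rabs_mult.
      apply Rmult_le_compat; try apply Rabs_pos; [|apply HhB, Hin; now left].
      replace (t' - t) with (t' - s - (t - s)) by ring. apply k_lipschitz. }
  assert (E2 : Rabs (RInt F' t t') <= Rabs (t' - t) * (M * B)).
  { apply Rabs_RInt_le_const; [auto|]. intros s Hs. unfold F'. rewrite Rabs_mult.
    apply Rmult_le_compat; try apply Rabs_pos; [apply k_bound | apply HhB, Hin; now right]. }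
  rewrite Rminus_0_r in E1. eapply Rle_trans; [apply Rabs_triang|].
  generalize (Rabs_pos t) (Rabs_pos (t' - t)) M_nonneg. nra.
Qed.

Lemma conv_sub (h1 h2 : R -> R) t : (forall x, continuous h1 x) -> (forall x, continuous h2 x) ->
  conv h1 t - conv h2 t = conv (fun s => h1 s - h2 s) t.
Proof.
  intros H1 H2. unfold conv.
  rewrite (RInt_ext (fun s => k (t - s) * (h1 s - h2 s))
                    (fun s => k (t - s) * h1 s - k (t - s) * h2 s))
    by (intros; apply Rmult_minus_distr_l).
  symmetry. apply (RInt_minus (fun s => k (t - s) * h1 s) (fun s => k (t - s) * h2 s));
    apply ex_RInt_continuous_R; intros; now apply conv_integrand_continuous.
Qed.

Lemma conv_bound (h : R -> R) t B : 0 <= t -> (forall x, continuous h x) ->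
  (forall s, 0 <= s <= t -> Rabs (h s) <= B) -> Rabs (conv h t) <= t * (M * B).
Proof.
  intros Ht Hh HhB. rewrite <- (Rabs_right t) at 2 by lra. rewrite <- (Rminus_0_r t) at 2.
  apply Rabs_RInt_le_const; [apply ex_RInt_continuous_R; intros; now apply conv_integrand_continuous|].
  intros s Hs. rewrite Rmin_left, Rmax_right in Hs by lra. rewrite Rabs_mult.
  apply Rmult_le_compat; try apply Rabs_pos; [apply k_bound | now apply HhB].
Qed.

Fixpoint picard (n : nat) : R -> R :=
  match n with
  | O => g
  | S n => fun t => g t + conv (picard n) t
  end.

Lemma picard_continuous n x : continuous (picard n) x.
Proof.
  revert x. induction n as [|n IH]; intros x; [apply g_continuous|].
  apply continuous_Rplus; [apply g_continuous | now apply conv_continuous].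
Qed.

(* Bielecki's weight exp (2 M t) makes each Picard step contract by 1/2 on [0, T]. *)
Lemma picard_step_bound n t : 0 <= t <= T ->
  Rabs (picard (S n) t - picard n t) <= T * (M * G) * (/2)^n * exp (2 * M * t).
Proof.
  assert (HM := M_nonneg). assert (HG := G_nonneg).
  revert t. induction n as [|n IH]; intros t Ht.
  - simpl. replace (g t + conv g t - g t) with (conv g t) by ring.
    eapply Rle_trans; [apply conv_bound; [lra | exact g_continuous | intros; apply g_bound; lra]|].
    assert (1 <= exp (2 * M * t)) by (rewrite <- exp_0; apply exp_le_compat; nra).
    assert (0 <= M * G) by nra.
    assert (t * (M * G) <= T * (M * G)) by nra. assert (0 <= T * (M * G)) by nra. nra.
  - set (c := T * (M * G) * (/2)^n).
    assert (Hc : 0 <= c) by (unfold c; repeat apply Rmult_le_pos; try lra; apply pow_le; lra).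
    replace (T * (M * G) * (/2)^(S n)) with (c * / 2) by (unfold c; simpl; ring).
    change (picard (S (S n)) t) with (g t + conv (picard (S n)) t).
    change (picard (S n) t) with (g t + conv (picard n) t).
    replace ((g t + conv (picard (S n)) t) - (g t + conv (picard n) t))
      with (conv (picard (S n)) t - conv (picard n) t) by ring.
    rewrite conv_sub by apply picard_continuous.
    assert (Hprim : is_RInt (fun s => M * (c * exp (2 * M * s))) 0 t
                      (c * exp (2 * M * t) / 2 - c * exp (2 * M * 0) / 2)).
    { apply (is_RInt_derive (fun s => c * exp (2 * M * s) / 2)).
      - intros x _. auto_derive; [trivial | field].
      - intros x _. apply continuous_of_ex_derive. auto_derive. trivial. }
    eapply Rle_trans; [apply Rabs_RInt_le_RInt with (g := fun s => M * (c * exp (2 * M * s)))|].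
    + lra.
    + apply ex_RInt_continuous_R; intros; apply conv_integrand_continuous.
      intros; apply continuous_Rminus; apply picard_continuous.
    + eexists; exact Hprim.
    + intros s Hs. rewrite Rabs_mult.
      apply Rmult_le_compat; try apply Rabs_pos; [apply k_bound | apply IH; lra].
    + rewrite (is_RInt_unique _ _ _ _ Hprim), Rmult_0_r, exp_0.
      generalize (exp_pos (2 * M * t)). nra.
Qed.

(* The iterates are controlled on [0, T] only; reading them through clamp T makes the limit
   continuous on all of R. *)
Definition volterra_solution (y : R) : R := real (Lim_seq (fun n => picard n (clamp T y))).

Let C := T * (M * G) * exp (2 * M * T).

Lemma picard_uniform n y : Rabs (picard n (clamp T y) - volterra_solution y) <= 2 * C * (/2)^n.
Proof.
  apply (geometric_cauchy_bound (fun n => picard n (clamp T y))). intros m.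
  assert (Hy := clamp_range T y T_nonneg).
  eapply Rle_trans; [apply picard_step_bound, Hy|].
  assert (exp (2 * M * clamp T y) <= exp (2 * M * T)).
  { apply exp_le_compat. generalize M_nonneg. nra. }
  assert (0 <= T * (M * G) * (/2)^m).
  { generalize M_nonneg G_nonneg (pow_le (/2) m ltac:(lra)).
    intros. repeat apply Rmult_le_pos; lra. }
  unfold C. replace (T * (M * G) * exp (2 * M * T) * (/2)^m)
    with (T * (M * G) * (/2)^m * exp (2 * M * T)) by ring.
  now apply Rmult_le_compat_l.
Qed.

Lemma volterra_solution_continuous x : continuous volterra_solution x.
Proof.
  apply (uniform_limit_continuous (fun n y => picard n (clamp T y))).
  - intros n y. apply continuous_Rcomp; [apply clamp_continuous | apply picard_continuous].
  - intros eps Heps. destruct (geometric_half_small (2 * C) eps Heps) as [N HN].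
    exists N. intros y. eapply Rle_lt_trans; [apply picard_uniform | exact HN].
Qed.

Lemma volterra_solution_eq t : 0 <= t <= T ->
  volterra_solution t = g t + conv volterra_solution t.
Proof.
  intros Ht. apply Rminus_diag_uniq, (eq_0_of_geometric_bound _ (C + T * (M * (2 * C)))).
  intros n.
  assert (E1 := picard_uniform (S n) t). rewrite clamp_id in E1 by exact Ht.
  assert (E2 : Rabs (conv (picard n) t - conv volterra_solution t) <= t * (M * (2 * C * (/2)^n))).
  { rewrite conv_sub by (apply picard_continuous || apply volterra_solution_continuous).
    apply conv_bound; [lra | intros; apply continuous_Rminus;
                              (apply picard_continuous || apply volterra_solution_continuous) |].
    intros s Hs. rewrite <- (clamp_id T s) at 1 by lra. apply picard_uniform. }
  replace (volterra_solution t - (g t + conv volterra_solution t))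
    with (- (picard (S n) t - volterra_solution t)
          + (conv (picard n) t - conv volterra_solution t)) by (simpl; ring).
  eapply Rle_trans; [apply Rabs_triang|]. rewrite Rabs_Ropp.
  assert (0 <= M * (2 * C * (/2)^n)).
  { unfold C. generalize M_nonneg G_nonneg (pow_le (/2) n ltac:(lra)) (exp_pos (2 * M * T)).
    intros. repeat apply Rmult_le_pos; lra. }
  assert (t * (M * (2 * C * (/2)^n)) <= T * (M * (2 * C * (/2)^n)))
    by (apply Rmult_le_compat_r; lra).
  replace ((C + T * (M * (2 * C))) * (/2)^n)
    with (2 * C * (/2)^(S n) + T * (M * (2 * C * (/2)^n))) by (simpl; field).
  lra.
Qed.

End Volterra.

Lemma volterra_solution_exists (k g : R -> R) T M L : 0 <= T ->
  (forall u, Rabs (k u) <= M) -> (forall u v, Rabs (k u - k v) <= L * Rabs (u - v)) ->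
  (forall x, continuous g x) ->
  exists Gam : R -> R, (forall x, continuous Gam x) /\
    forall t, 0 <= t <= T -> Gam t = g t + RInt (fun s => k (t - s) * Gam s) 0 t.
Proof.
  intros HT Hk Hlip Hg.
  destruct (continuous_bounded_on g 0 T HT (fun x _ => Hg x)) as [G [_ HG]].
  exists (volterra_solution k g T). split.
  - exact (volterra_solution_continuous k g T M L G HT Hk Hlip Hg HG).
  - exact (volterra_solution_eq k g T M L G HT Hk Hlip Hg HG).
Qed.

(** * The weighting function *)

(* auto_derive writes Derive (fun y => f y) for an unknown f, which ring treats as an atom
   distinct from Derive f. *)
Ltac eta_Derive :=
  repeat match goal with
  | |- context [Derive (fun y => ?f y)] => change (Derive (fun y => f y)) with (Derive f)
  end.

Section WeightingFunction.

Variable w : R -> R.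
Hypothesis hw : wminus_hyp w.

Lemma w_nonneg x : 0 <= x <= 1 -> 0 <= w x.
Proof. intros Hx. destruct hw as (_ & Hrange & _). now apply Hrange. Qed.

Lemma w_ex_derive x : 0 <= x <= 1 -> ex_derive w x.
Proof. intros Hx. destruct hw as (_ & _ & Hd & _). now apply Hd. Qed.

Lemma Dw_ex_derive x : 0 <= x <= 1 -> ex_derive (Derive w) x.
Proof. intros Hx. destruct hw as (_ & _ & Hd & _). now apply Hd. Qed.

Lemma D2w_ex_derive x : 0 <= x <= 1 -> ex_derive (Derive (Derive w)) x.
Proof. intros Hx. destruct hw as (_ & _ & Hd & _). now apply Hd. Qed.

Lemma w_0 : w 0 = 0.
Proof. now destruct hw as (_ & _ & _ & H & _). Qed.

Lemma w_1 : w 1 = 1.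
Proof. now destruct hw as (_ & _ & _ & _ & H & _). Qed.

Lemma Dw_0_gt_1 : Derive w 0 > 1.
Proof. now destruct hw as (_ & _ & _ & _ & _ & H & _). Qed.

Lemma Dw_1_gt_1 : Derive w 1 > 1.
Proof. now destruct hw as (_ & _ & _ & _ & _ & _ & H & _). Qed.

Lemma D3w_pos p : 0 <= p <= 1 -> Derive (Derive (Derive w)) p > 0.
Proof. intros Hp. destruct hw as (_ & _ & _ & _ & _ & _ & _ & H). now apply H. Qed.

Lemma D2w_increasing u v : 0 <= u -> u < v -> v <= 1 -> Derive (Derive w) u < Derive (Derive w) v.
Proof.
  intros Hu Huv Hv.
  destruct (MVT_gen (Derive (Derive w)) u v (Derive (Derive (Derive w)))) as [c [Hc Hmvt]];
    rewrite ?Rmin_left, ?Rmax_right in * by lra.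
  - intros x Hx. apply Derive_correct, D2w_ex_derive. lra.
  - intros x Hx. apply continuity_pt_filterlim, continuous_of_ex_derive, D2w_ex_derive. lra.
  - assert (Derive (Derive (Derive w)) c > 0) by (apply D3w_pos; lra). nra.
Qed.

Definition gap (t : R) : R := exp (- t) - w (exp (- t)).

Lemma exists_gap_neg : exists T, 0 < T /\ gap T < 0.
Proof.
  destruct (proj1 (is_derive_Reals _ _ _) (Derive_correct _ _ (w_ex_derive 0 ltac:(lra)))
              (Derive w 0 - 1)) as [delta Hdelta]; [generalize Dw_0_gt_1; lra|].
  set (h := Rmin (delta / 2) (1 / 2)).
  assert (Hh : 0 < h < 1 /\ h < delta).
  { assert (0 < delta) by apply cond_pos. unfold h.
    generalize (Rmin_l (delta / 2) (1 / 2)) (Rmin_r (delta / 2) (1 / 2)) (Rmin_glb_lt (delta / 2) (1 / 2) 0).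
    lra. }
  assert (Hh0 : h <> 0) by lra. assert (Hhd : Rabs h < delta) by (rewrite Rabs_right; lra).
  specialize (Hdelta h Hh0 Hhd).
  rewrite Rplus_0_l, w_0, Rminus_0_r in Hdelta. apply Rabs_def2 in Hdelta.
  exists (- ln h). unfold gap. rewrite Ropp_involutive, exp_ln by lra. split.
  - assert (ln h < 0) by (rewrite <- ln_1; apply ln_increasing; lra). lra.
  - assert (1 < w h / h) by lra.
    apply Rmult_lt_compat_r with (r := h) in H; [|lra].
    unfold Rdiv in H. rewrite Rmult_assoc, Rinv_l, Rmult_1_r in H by lra. lra.
Qed.

Definition dgap (t : R) : R := - exp (- t) + Derive w (exp (- t)) * exp (- t).
Definition kern (u : R) : R := Derive w (exp (- u)) * exp (- u).
Definition dkern (u : R) : R :=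
  - (Derive (Derive w) (exp (- u)) * exp (- u) * exp (- u) + Derive w (exp (- u)) * exp (- u)).

Lemma kern_is_derive u : 0 <= u -> is_derive kern u (dkern u).
Proof.
  intros Hu. unfold kern, dkern.
  auto_derive; [now apply Dw_ex_derive, exp_neg_range | eta_Derive; ring].
Qed.

Lemma continuous_dkern u : 0 <= u -> continuous dkern u.
Proof.
  intros Hu. apply continuous_of_ex_derive. unfold dkern.
  auto_derive. repeat split; [apply D2w_ex_derive | apply Dw_ex_derive]; now apply exp_neg_range.
Qed.

Lemma gap_is_derive t : 0 <= t -> is_derive gap t (dgap t).
Proof.
  intros Ht. unfold gap, dgap.
  auto_derive; [apply w_ex_derive, exp_neg_range; lra | eta_Derive; ring].
Qed.

Lemma continuous_dgap u : 0 <= u -> continuous dgap u.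
Proof.
  intros Hu. apply continuous_of_ex_derive. unfold dgap.
  auto_derive. now apply Dw_ex_derive, exp_neg_range.
Qed.

(* w is differentiable on [0, 1] only, so kernel and source are frozen outside [0, T] to get
   globally continuous data. *)
Lemma resolvent_exists T : 0 < T ->
  exists Gam : R -> R, (forall x, continuous Gam x) /\
    forall t, 0 <= t <= T -> Gam t = dgap t + RInt (fun s => kern (t - s) * Gam s) 0 t.
Proof.
  intros HT.
  destruct (bounded_clamp_comp kern T) as [M [_ HM]];
    [lra | intros; eapply continuous_of_is_derive, kern_is_derive; lra |].
  destruct (lipschitz_clamp_comp kern dkern T) as [L HL];
    [lra | intros; apply kern_is_derive; lra | intros; apply continuous_dkern; lra |].
  destruct (volterra_solution_exists (fun u => kern (clamp T u)) (fun u => dgap (clamp T u)) T M L)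
    as [Gam [HGc HGeq]]; [lra | exact HM | exact HL | |].
  { intros x. apply continuous_Rcomp; [apply clamp_continuous | apply continuous_dgap, clamp_range; lra]. }
  exists Gam. split; [exact HGc|]. intros t Ht.
  rewrite HGeq, clamp_id by exact Ht. f_equal. apply RInt_ext.
  intros s Hs. rewrite Rmin_left, Rmax_right in Hs by lra. now rewrite clamp_id by lra.
Qed.

Lemma hermite_dd_w_dilate_pos c x X : 0 < c -> 0 < x < X -> X * c <= 1 ->
  0 < hermite_dd x X (w (0 * c)) (w (x * c)) (w (X * c)) (Derive w (X * c) * c).
Proof.
  intros Hc Hx HXc.
  assert (Hz : forall z, 0 <= z <= X -> 0 <= z * c <= 1) by (intros; split; nra).
  apply (hermite_dd_pos (fun z => w (z * c)) (fun z => Derive w (z * c) * c)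
                        (fun z => Derive (Derive w) (z * c) * c * c)).
  - exact Hx.
  - intros z Hzx. auto_derive; [now apply w_ex_derive, Hz | eta_Derive; ring].
  - intros z Hzx. auto_derive; [now apply Dw_ex_derive, Hz | eta_Derive; ring].
  - intros u v Hu Huv Hv. apply Rmult_lt_compat_r; [exact Hc|]. apply Rmult_lt_compat_r; [exact Hc|].
    apply D2w_increasing; nra.
Qed.

Lemma continuous_w_exp t s : s <= t -> continuous (fun s => w (exp (- t + s))) s.
Proof.
  intros Hs. apply continuous_of_ex_derive. auto_derive.
  apply w_ex_derive. replace (- t + s) with (- (t - s)) by ring. apply exp_neg_range. lra.
Qed.

Section Resolvent.

Variables (T : R) (Gam : R -> R).
Hypothesis T_pos : 0 < T.
Hypothesis Gam_continuous : forall x, continuous Gam x.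
Hypothesis Gam_eq :
  forall t, 0 <= t <= T -> Gam t = dgap t + RInt (fun s => kern (t - s) * Gam s) 0 t.

Lemma kern_clamp_continuous x : continuous (fun u => kern (clamp T u)) x.
Proof.
  apply continuous_Rcomp; [apply clamp_continuous|].
  eapply continuous_of_is_derive, kern_is_derive, clamp_range. lra.
Qed.

(* A primitive of the clamped kernel: it agrees with [w (exp (- u))] on [0, T]
   but, unlike it, is differentiable on all of R. *)
Definition Kw (u : R) : R := 1 - RInt (fun z => kern (clamp T z)) 0 u.

Lemma Kw_is_derive u : is_derive Kw u (- kern (clamp T u)).
Proof.
  replace (- kern (clamp T u)) with (0 - kern (clamp T u)) by ring.
  apply is_derive_Rminus; [auto_derive; trivial|].
  apply (is_derive_RInt (fun z => kern (clamp T z)) (RInt (fun z => kern (clamp T z)) 0) 0);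
    [|apply kern_clamp_continuous].
  apply filter_forall. intros b.
  apply (RInt_correct (V := R_CompleteNormedModule)), ex_RInt_continuous_R.
  intros; apply kern_clamp_continuous.
Qed.

Lemma Kw_0 : Kw 0 = 1.
Proof. unfold Kw. rewrite RInt_point_R. ring. Qed.

Lemma Kw_eq u : 0 <= u <= T -> Kw u = w (exp (- u)).
Proof.
  intros Hu. apply Rminus_diag_uniq.
  rewrite (is_derive_0_const (fun z => Kw z - w (exp (- z))) 0 u); [| lra |].
  - rewrite Kw_0, Ropp_0, exp_0, w_1. ring.
  - intros z Hz. replace 0 with (- kern (clamp T z) - - kern z)
      by (rewrite clamp_id by lra; ring).
    apply is_derive_Rminus; [apply Kw_is_derive|].
    unfold kern. auto_derive; [apply w_ex_derive, exp_neg_range; lra | eta_Derive; ring].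
Qed.

Lemma conv_Kw_is_derive z : 0 <= z <= T ->
  is_derive (fun t => RInt (fun s => Kw (t - s) * Gam s) 0 t) z (dgap z).
Proof.
  intros Hz.
  replace (dgap z) with (Kw 0 * Gam z + RInt (fun s => - kern (clamp T (z - s)) * Gam s) 0 z).
  - apply (is_derive_convolution Kw (fun u => - kern (clamp T u)));
      [apply Kw_is_derive | intros; apply continuous_Ropp, kern_clamp_continuous | apply Gam_continuous].
  - rewrite (RInt_ext_R _ (fun s => - (kern (z - s) * Gam s))).
    + rewrite RInt_Ropp, Kw_0, (Gam_eq z Hz); [ring|].
      apply ex_RInt_continuous_R. intros s Hs. rewrite Rmin_left, Rmax_right in Hs by lra.
      apply continuous_Rmult; [|apply Gam_continuous].
      apply (continuous_Rcomp (fun s => z - s)).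
      * apply continuous_Rminus; [apply continuous_const | apply continuous_id].
      * eapply continuous_of_is_derive, kern_is_derive. lra.
    + intros s Hs. rewrite Rmin_left, Rmax_right in Hs by lra. rewrite clamp_id by lra. ring.
Qed.

Lemma RInt_w_Gam t : 0 <= t <= T ->
  RInt (fun s => w (exp (- t + s)) * Gam s) 0 t = gap t.
Proof.
  intros Ht.
  assert (H : RInt (fun s => Kw (t - s) * Gam s) 0 t - gap t
              = RInt (fun s => Kw (0 - s) * Gam s) 0 0 - gap 0).
  { apply (is_derive_0_const (fun z => RInt (fun s => Kw (z - s) * Gam s) 0 z - gap z)); [lra|].
    intros z Hz.
    assert (Hd := is_derive_Rminus _ _ z _ _ (conv_Kw_is_derive z ltac:(lra)) (gap_is_derive z ltac:(lra))).
    now rewrite Rminus_diag in Hd. }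
  rewrite RInt_point_R in H. unfold gap at 2 in H. rewrite Ropp_0, exp_0, w_1 in H.
  rewrite (RInt_ext_R _ (fun s => Kw (t - s) * Gam s)); [lra|].
  intros s Hs. rewrite Rmin_left, Rmax_right in Hs by lra.
  rewrite Kw_eq by lra. do 3 f_equal. ring.
Qed.

Lemma Gam_0_pos : 0 < Gam 0.
Proof.
  rewrite Gam_eq, RInt_point_R by lra. unfold dgap.
  rewrite Ropp_0, exp_0. generalize Dw_1_gt_1. lra.
Qed.

Lemma Gam_not_pos : gap T < 0 -> ~ (forall t, 0 <= t <= T -> 0 < Gam t).
Proof.
  intros HT Hpos.
  assert (0 <= RInt (fun s => w (exp (- T + s)) * Gam s) 0 T); [|rewrite RInt_w_Gam in H; lra].
  apply RInt_ge_0; [lra | |].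
  - apply ex_RInt_continuous_R. intros s Hs. rewrite Rmin_left, Rmax_right in Hs by lra.
    apply continuous_Rmult; [apply continuous_w_exp; lra | apply Gam_continuous].
  - intros s Hs. apply Rmult_le_pos; [|left; apply Hpos; lra].
    apply w_nonneg. replace (- T + s) with (- (T - s)) by ring. apply exp_neg_range. lra.
Qed.

Section Tail.

Variable t0 : R.
Hypothesis t0_pos : 0 < t0.
Hypothesis t0_le_T : t0 <= T.
Hypothesis Gam_t0 : Gam t0 = 0.
Hypothesis Gam_pos : forall s, 0 <= s < t0 -> 0 < Gam s.

Definition gamma (s : R) : R := Gam (clamp t0 s).

Lemma ex_RInt_Phi_gamma t : 0 <= t -> ex_RInt (fun s => w (exp (- t + s)) * gamma s) 0 t.
Proof.
  intros Ht. apply ex_RInt_continuous_R. intros s Hs. rewrite Rmin_left, Rmax_right in Hs by lra.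
  apply continuous_Rmult; [apply continuous_w_exp; lra|].
  apply (continuous_Rcomp (clamp t0) Gam); [apply clamp_continuous | apply Gam_continuous].
Qed.

Lemma Phi_gamma_0 t : 0 <= t <= t0 -> Phi w gamma t = 0.
Proof.
  intros Ht. unfold Phi.
  rewrite (RInt_ext_R _ (fun s => w (exp (- t + s)) * Gam s)); [rewrite RInt_w_Gam by lra; unfold gap; ring|].
  intros s Hs. rewrite Rmin_left, Rmax_right in Hs by lra. unfold gamma. now rewrite clamp_id by lra.
Qed.

(* H(z) = z - w z - Iw z in the notation of the header, and Jw = Iw'(X). *)
Let X := exp (- t0).
Let Iw (z : R) : R := RInt (fun s => w (z * exp s) * Gam s) 0 t0.
Let Jw : R := RInt (fun s => Derive w (X * exp s) * exp s * Gam s) 0 t0.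

Lemma X_range : 0 < X < 1.
Proof.
  split; [apply exp_pos|]. rewrite <- exp_0. apply exp_increasing. lra.
Qed.

Lemma dilate_range z s : 0 <= z <= X -> s <= t0 -> 0 <= z * exp s <= 1.
Proof.
  intros Hz Hs. assert (0 < exp s) by apply exp_pos.
  assert (X * exp s <= 1).
  { unfold X. rewrite <- exp_plus, <- exp_0. apply exp_le_compat. lra. }
  split; nra.
Qed.

Lemma ex_RInt_Iw z : 0 <= z <= X -> ex_RInt (fun s => w (z * exp s) * Gam s) 0 t0.
Proof.
  intros Hz. apply ex_RInt_continuous_R. intros s Hs. rewrite Rmin_left, Rmax_right in Hs by lra.
  apply continuous_Rmult; [|apply Gam_continuous].
  apply continuous_of_ex_derive. auto_derive. apply w_ex_derive, dilate_range; lra.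
Qed.

Lemma ex_RInt_Jw : ex_RInt (fun s => Derive w (X * exp s) * exp s * Gam s) 0 t0.
Proof.
  apply ex_RInt_continuous_R. intros s Hs. rewrite Rmin_left, Rmax_right in Hs by lra.
  apply continuous_Rmult; [|apply Gam_continuous].
  apply continuous_of_ex_derive. auto_derive.
  apply Dw_ex_derive, dilate_range; generalize X_range; lra.
Qed.

Lemma Phi_gamma_tail t : t0 <= t -> Phi w gamma t = gap t - Iw (exp (- t)).
Proof.
  intros Ht. unfold Phi. f_equal.
  assert (Hex := ex_RInt_Phi_gamma t ltac:(lra)).
  rewrite <- (RInt_Chasles_R _ 0 t0 t);
    [| apply (ex_RInt_Chasles_1 (V := R_CompleteNormedModule) _ _ _ t); [lra | exact Hex]
     | apply (ex_RInt_Chasles_2 (V := R_CompleteNormedModule) _ 0); [lra | exact Hex]].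
  rewrite (RInt_ext_R _ (fun _ => 0) t0 t), RInt_0_R, Rplus_0_r.
  - apply RInt_ext_R. intros s Hs. rewrite Rmin_left, Rmax_right in Hs by lra.
    unfold gamma. now rewrite clamp_id, exp_plus by lra.
  - intros s Hs. rewrite Rmin_left, Rmax_right in Hs by lra.
    unfold gamma. rewrite clamp_of_ge, Gam_t0 by lra. ring.
Qed.

Lemma Iw_0 : Iw 0 = 0.
Proof.
  unfold Iw. rewrite (RInt_ext_R _ (fun _ => 0)); [apply RInt_0_R|].
  intros s _. rewrite Rmult_0_l, w_0. ring.
Qed.

Lemma Iw_X : X - w X - Iw X = 0.
Proof.
  unfold Iw. rewrite (RInt_ext_R _ (fun s => w (exp (- t0 + s)) * Gam s)).
  - rewrite RInt_w_Gam by lra. unfold gap, X. ring.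
  - intros s _. unfold X. now rewrite exp_plus.
Qed.

Lemma Jw_eq : 1 - Derive w X - Jw = 0.
Proof.
  assert (H := Gam_eq t0 ltac:(lra)).
  rewrite Gam_t0, (RInt_ext_R _ (fun s => X * (Derive w (X * exp s) * exp s * Gam s))) in H.
  - rewrite RInt_Rmult_l in H by apply ex_RInt_Jw. fold Jw in H.
    unfold dgap in H. fold X in H. generalize X_range. intros. nra.
  - intros s Hs. rewrite Rmin_left, Rmax_right in Hs by lra.
    unfold kern. replace (- (t0 - s)) with (- t0 + s) by ring. rewrite exp_plus. fold X.
    ring.
Qed.

Lemma hermite_dd_Iw_nonneg x : 0 < x < X -> 0 <= hermite_dd x X (Iw 0) (Iw x) (Iw X) Jw.
Proof.
  intros Hx. assert (HX := X_range).
  assert (HI : is_RInt (fun s => hermite_dd x X (w (0 * exp s) * Gam s) (w (x * exp s) * Gam s)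
                                   (w (X * exp s) * Gam s) (Derive w (X * exp s) * exp s * Gam s))
                       0 t0 (hermite_dd x X (Iw 0) (Iw x) (Iw X) Jw)).
  { apply is_RInt_hermite_dd; apply (RInt_correct (V := R_CompleteNormedModule));
      [apply ex_RInt_Iw; lra.. | apply ex_RInt_Jw]. }
  rewrite <- (is_RInt_unique _ _ _ _ HI). apply RInt_ge_0; [lra | eexists; exact HI |].
  intros s Hs. rewrite hermite_dd_scale. apply Rmult_le_pos.
  - left. apply hermite_dd_w_dilate_pos; [apply exp_pos | exact Hx |].
    apply dilate_range; lra.
  - left. apply Gam_pos. lra.
Qed.

Lemma Phi_gamma_neg t : t0 < t -> Phi w gamma t < 0.
Proof.
  intros Ht. set (x := exp (- t)).
  assert (Hx : 0 < x < X) by (split; [apply exp_pos | apply exp_increasing; lra]).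
  rewrite Phi_gamma_tail by lra. unfold gap. fold x. apply (hermite_dd_neg x X); [exact Hx|].
  replace (hermite_dd x X 0 (x - w x - Iw x) 0 0)
    with (hermite_dd x X (0 - w 0 - Iw 0) (x - w x - Iw x) (X - w X - Iw X) (1 - Derive w X - Jw))
    by (rewrite w_0, Iw_0, Iw_X, Jw_eq; f_equal; ring).
  rewrite !hermite_dd_sub, hermite_dd_id by exact Hx.
  generalize (hermite_dd_w_dilate_pos 1 x X Rlt_0_1 Hx) (hermite_dd_Iw_nonneg x Hx).
  rewrite !Rmult_1_r. generalize X_range. lra.
Qed.

End Tail.
End Resolvent.
End WeightingFunction.

Theorem lemma8 (w : R -> R) (hw : wminus_hyp w) :
  exists (gamma : R -> R) (t0 : R),
    0 < t0 /\
    (forall t, 0 <= t -> ex_RInt (fun s => w (exp (- t + s)) * gamma s) 0 t) /\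
    (forall t, 0 <= t < t0 -> gamma t > 0) /\
    (forall t, t0 <= t -> gamma t = 0) /\
    (forall t, 0 <= t <= t0 -> Phi w gamma t = 0) /\
    (forall t, t0 < t -> Phi w gamma t < 0).
Proof.
  destruct (exists_gap_neg w hw) as [T [HT Hgap]].
  destruct (resolvent_exists w hw T HT) as [Gam [HGc HGeq]].
  destruct (first_root Gam 0 T) as [t0 [Ht0 [HGt0 HGpos]]].
  - lra.
  - intros; apply HGc.
  - eapply Gam_0_pos; eauto.
  - eapply Gam_not_pos; eauto.
  - exists (gamma Gam t0), t0. repeat split.
    + lra.
    + intros t Ht. now apply ex_RInt_Phi_gamma.
    + intros t Ht. unfold gamma. rewrite clamp_id by lra. apply HGpos. lra.
    + intros t Ht. unfold gamma. now rewrite clamp_of_ge by lra.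
    + intros t Ht. eapply Phi_gamma_0; eauto; lra.
    + intros t Ht. eapply Phi_gamma_neg; eauto; lra.
Qed.
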